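(* Let $\widetilde\nabla$ be a canonical snm-connection on $\mathbb R^3$ determined by the unit constant vector field $\mathsf C$. Let $\vec w\in\mathbb R^3$ be a unit vector and $\gamma:I\to\mathbb R^3$ a curve parametrized by arc length contained in a plane orthogonal to $\vec w$, with unit normal $\mathbf n=\gamma'\times\vec w$ and curvature $\kappa$ defined by $\gamma''=\kappa\mathbf n$. Let $M$ be the cylindrical surface $\psi(s,t)=\gamma(s)+t\vec w$, $s\in I$, $t\in\mathbb R$. Then the sectional curvature of $M$ with respect to $\widetilde\nabla$ at $\psi(s,t)$ is $$K=\frac12\Big(\langle\vec w,\mathsf C\rangle^2+\langle\gamma'(s),\mathsf C\rangle^2-\kappa(s)\langle\mathbf n(s),\mathsf C\rangle\Big).$$
   Context: Let $\langle\cdot,\cdot\rangle$ be the Euclidean metric on $\mathbb R^3$ and $\widetilde\nabla^0$ its Levi-Civita connection (the ordinary directional derivative). Given a smooth vector field $\mathsf C$ on $\mathbb R^3$, the semi-symmetric non-metric connection (snm-connection) determined by $\mathsf C$ is $\widetilde\nabla_XY=\widetilde\nabla^0_XY+\langle \mathsf C,Y\rangle X$. It is called canonical if $\mathsf C$ is a constant vector field with $|\mathsf C|=1$. Its curvature tensor is $\widetilde R(X,Y)Z=\widetilde\nabla_X\widetilde\nabla_YZ-\widetilde\nabla_Y\widetilde\nabla_XZ-\widetilde\nabla_{[X,Y]}Z$. For a surface $M$ immersed in $\mathbb R^3$, the induced connection is $\nabla_XY=(\widetilde\nabla_XY)^{\top}$ (tangential component) for tangent vector fields $X,Y$, with curvature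 tensor $R$ defined by the same formula as $\widetilde R$, and the sectional curvature of $M$ with respect to $\widetilde\nabla$ at $p$ is $K(p)=\frac12\big(\langle R(e_1,e_2)e_2,e_1\rangle+\langle R(e_2,e_1)e_1,e_2\rangle\big)$ for an orthonormal basis $\{e_1,e_2\}$ of $T_pM$ (independent of the basis). *)

From Stdlib Require Import Reals.
From Coquelicot Require Import Coquelicot.
Open Scope R_scope.

Definition vec3 := (R * R * R)%type.
Definition vx (v : vec3) : R := fst (fst v).
Definition vy (v : vec3) : R := snd (fst v).
Definition vz (v : vec3) : R := snd v.
Definition mkv (a b c : R) : vec3 := (a, b, c).

Definition vadd (u v : vec3) : vec3 := mkv (vx u + vx v) (vy u + vy v) (vz u + vz v).
Definition vscal (k : R) (v : vec3) : vec3 := mkv (k * vx v) (k * vy v) (k * vz v).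
Definition vsub (u v : vec3) : vec3 := vadd u (vscal (-1) v).
Definition dot (u v : vec3) : R := vx u * vx v + vy u * vy v + vz u * vz v.
Definition vnorm (v : vec3) : R := sqrt (dot v v).
Definition cross (u v : vec3) : vec3 :=
  mkv (vy u * vz v - vz u * vy v) (vz u * vx v - vx u * vz v) (vx u * vy v - vy u * vx v).

Definition dcurve (g : R -> vec3) (s : R) : vec3 :=
  mkv (Derive (fun x => vx (g x)) s) (Derive (fun x => vy (g x)) s)
      (Derive (fun x => vz (g x)) s).

Definition smooth_curve_on (I : R -> Prop) (g : R -> vec3) : Prop :=
  forall (k : nat) (s : R), I s ->
    ex_derive_n (fun x => vx (g x)) k s /\
    ex_derive_n (fun x => vy (g x)) k s /\
    ex_derive_n (fun x => vz (g x)) k s.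

Definition vfield := R -> R -> vec3.

Definition d_s (F : vfield) : vfield := fun s t => dcurve (fun x => F x t) s.
Definition d_t (F : vfield) : vfield := fun s t => dcurve (fun y => F s y) t.

Definition unit_normal (psi : vfield) (s t : R) : vec3 :=
  let N := cross (d_s psi s t) (d_t psi s t) in vscal (/ vnorm N) N.
Definition tang (psi : vfield) (s t : R) (v : vec3) : vec3 :=
  let N := unit_normal psi s t in vsub v (vscal (dot v N) N).

Definition cfield (psi : vfield) (a b : R) : vfield :=
  fun s t => vadd (vscal a (d_s psi s t)) (vscal b (d_t psi s t)).

(* Induced snm-connection on M: for X = a psi_s + b psi_t and a tangent field Z,
   nabla_X Z = ( D_X Z + <C, Z> X )^T,  where D_X Z = a d_s Z + b d_t Z
   (ambient: tilde-nabla_X Y = tilde-nabla^0_X Y + <C,Y> X). *)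
Definition nabla (C : vec3) (psi : vfield) (a b : R) (Z : vfield) : vfield :=
  fun s t =>
    tang psi s t
      (vadd (vadd (vscal a (d_s Z s t)) (vscal b (d_t Z s t)))
            (vscal (dot C (Z s t)) (cfield psi a b s t))).

(* Curvature tensor R(X,Y)Z for X = a1 psi_s + b1 psi_t, Y = a2 psi_s + b2 psi_t
   (constant-coefficient coordinate combinations, so [X,Y] = 0):
   R(X,Y)Z = nabla_X nabla_Y Z - nabla_Y nabla_X Z. *)
Definition curv (C : vec3) (psi : vfield) (a1 b1 a2 b2 : R) (Z : vfield) : vfield :=
  fun s t => vsub (nabla C psi a1 b1 (nabla C psi a2 b2 Z) s t)
                  (nabla C psi a2 b2 (nabla C psi a1 b1 Z) s t).

Definition sect_expr (C : vec3) (psi : vfield) (a1 b1 a2 b2 s t : R) : R :=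
  let E1 := cfield psi a1 b1 in
  let E2 := cfield psi a2 b2 in
  / 2 * (dot (curv C psi a1 b1 a2 b2 E2 s t) (E1 s t)
         + dot (curv C psi a2 b2 a1 b1 E1 s t) (E2 s t)).

Definition cylinder (g : R -> vec3) (w : vec3) : vfield :=
  fun s t => vadd (g s) (vscal t w).

(* On the cylinder the coordinate fields E = a gamma' + b w depend on s only, and
   their s-derivatives are multiples of the unit normal n = gamma' x w, which the
   tangential projection kills.  Hence nabla_X E = <C,E> X, and one more covariant
   derivative gives
     nabla_Y nabla_X E = a_Y a_E kappa <C,n> X + <C,E> <C,X> Y.
   For an orthonormal pair (e1, e2) the two curvature terms therefore contribute
   <C,e2>^2 - a2^2 kappa <C,n> and <C,e1>^2 - a1^2 kappa <C,n>; since the coefficient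
   matrix of (e1, e2) in the orthonormal frame (gamma', w) is orthogonal, these sum
   to <C,w>^2 + <C,gamma'>^2 - kappa <C,n>. *)

From Stdlib Require Import Reals Lra FunctionalExtensionality.
From Coquelicot Require Import Coquelicot.
Open Scope R_scope.

Ltac vcomp := cbv [mkv vadd vscal vsub dot cross dcurve] in *; cbn [vx vy vz fst snd] in *.

Lemma vec3_ext (u v : vec3) : vx u = vx v -> vy u = vy v -> vz u = vz v -> u = v.
Proof. destruct u as [[u1 u2] u3], v as [[v1 v2] v3]; cbv; intros -> -> ->; reflexivity. Qed.

Lemma dot_comm (u v : vec3) : dot u v = dot v u.
Proof. unfold dot; ring. Qed.

Lemma dot_vsub_l (p q r u : R) (X Y Z W V : vec3) :
  dot (vsub (vadd (vscal p X) (vscal q Y)) (vadd (vscal r Z) (vscal u W))) V =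
  p * dot X V + q * dot Y V - r * dot Z V - u * dot W V.
Proof. vcomp; ring. Qed.

Lemma dot_cross_orthonormal (p w : vec3) :
  dot p p = 1 -> dot w w = 1 -> dot p w = 0 -> dot (cross p w) (cross p w) = 1.
Proof.
  intros Hp Hw Hpw.
  transitivity (dot p p * dot w w - dot p w ^ 2); [vcomp; ring|].
  rewrite Hp, Hw, Hpw; ring.
Qed.

Lemma proj_orth_unit (n u : vec3) (k : R) : dot n n = 1 -> dot u n = 0 ->
  vsub (vadd (vscal k n) u) (vscal (dot (vadd (vscal k n) u) n) n) = u.
Proof.
  intros Hn Hu.
  replace (dot (vadd (vscal k n) u) n) with (k * dot n n + dot u n) by (vcomp; ring).
  rewrite Hn, Hu; apply vec3_ext; vcomp; ring.
Qed.

(* Rows orthonormal implies columns orthonormal, via a1 = D b2, b1 = - D a2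
   with D = a1 b2 - a2 b1 the determinant, D^2 = 1. *)
Lemma orthonormal_rows_cols (a1 b1 a2 b2 : R) :
  a1^2 + b1^2 = 1 -> a2^2 + b2^2 = 1 -> a1*a2 + b1*b2 = 0 ->
  a1^2 + a2^2 = 1 /\ b1^2 + b2^2 = 1 /\ a1*b1 + a2*b2 = 0.
Proof.
  intros H1 H2 H3.
  set (D := a1*b2 - a2*b1).
  assert (HD : D^2 = 1).
  { replace (D^2) with ((a1^2+b1^2)*(a2^2+b2^2) - (a1*a2+b1*b2)^2) by (unfold D; ring).
    rewrite H1, H2, H3; ring. }
  assert (Ha1 : a1 = D*b2).
  { assert (E : a1 - D*b2 = a1*(1 - (a2^2+b2^2)) + a2*(a1*a2+b1*b2)) by (unfold D; ring).
    rewrite H2, H3 in E; lra. }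
  assert (Hb1 : b1 = - D*a2).
  { assert (E : b1 + D*a2 = b1*(1 - (a2^2+b2^2)) + b2*(a1*a2+b1*b2)) by (unfold D; ring).
    rewrite H2, H3 in E; lra. }
  clearbody D; rewrite Ha1, Hb1.
  replace ((D*b2)^2) with (D^2*b2^2) by ring; replace ((-D*a2)^2) with (D^2*a2^2) by ring.
  replace (D*b2*(-D*a2) + a2*b2) with ((1 - D^2)*a2*b2) by ring.
  rewrite HD; repeat split; [lra | lra | ring].
Qed.

Lemma curve_components (g : R -> vec3) :
  exists g1 g2 g3 : R -> R, g = fun x => mkv (g1 x) (g2 x) (g3 x).
Proof.
  exists (fun x => vx (g x)), (fun x => vy (g x)), (fun x => vz (g x)).
  apply functional_extensionality; intro x; destruct (g x) as [[? ?] ?]; reflexivity.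
Qed.

(* Splitting a curve into explicit components lets [auto_derive] see through it. *)
Ltac split_curve g :=
  let g1 := fresh "g1" in let g2 := fresh "g2" in let g3 := fresh "g3" in
  destruct (curve_components g) as [g1 [g2 [g3 ->]]].

Definition twice_derivable (g : R -> vec3) (x : R) : Prop :=
  ex_derive (fun x => vx (g x)) x /\ ex_derive (fun x => vy (g x)) x /\
  ex_derive (fun x => vz (g x)) x /\
  ex_derive (fun x => Derive (fun x => vx (g x)) x) x /\
  ex_derive (fun x => Derive (fun x => vy (g x)) x) x /\
  ex_derive (fun x => Derive (fun x => vz (g x)) x) x.

Lemma smooth_twice_derivable (I : R -> Prop) (g : R -> vec3) (x : R) :
  smooth_curve_on I g -> I x -> twice_derivable g x.
Proof.
  intros Hg Hx.
  destruct (Hg 1%nat x Hx) as [A1 [A2 A3]], (Hg 2%nat x Hx) as [B1 [B2 B3]].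
  repeat split; assumption.
Qed.

Lemma dcurve_planar_orth (a b : Rbar) (g : R -> vec3) (w : vec3) (c x : R) :
  (forall s : R, Rbar_lt a s -> Rbar_lt s b -> dot (g s) w = c) ->
  Rbar_lt a x -> Rbar_lt x b -> twice_derivable g x -> dot (dcurve g x) w = 0.
Proof.
  intros Hc Ha Hb [H1 [H2 [H3 _]]].
  assert (E : Derive (fun s => dot (g s) w) x = Derive (fun _ => c) x).
  { apply Derive_ext_loc, locally_interval with a b; auto. }
  rewrite Derive_const in E; rewrite <- E; symmetry.
  apply is_derive_unique; split_curve g; destruct w as [[w1 w2] w3]; unfold dot; vcomp.
  auto_derive; repeat split; auto; ring.
Qed.

Lemma d_s_local (a b : Rbar) (Z : vfield) (z : R -> vec3) (s t : R) :
  Rbar_lt a s -> Rbar_lt s b ->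
  (forall x : R, Rbar_lt a x -> Rbar_lt x b -> Z x t = z x) -> d_s Z s t = dcurve z s.
Proof.
  intros Ha Hb H; unfold d_s, dcurve, mkv.
  f_equal; [f_equal|]; apply Derive_ext_loc, locally_interval with a b; auto;
    intros; rewrite H; auto.
Qed.

Lemma d_t_const (Z : vfield) (s t : R) (v : vec3) :
  (forall y, Z s y = v) -> d_t Z s t = mkv 0 0 0.
Proof.
  intros H; unfold d_t, dcurve.
  rewrite (Derive_ext (fun y => vx (Z s y)) (fun _ => vx v)) by (intro; rewrite H; auto).
  rewrite (Derive_ext (fun y => vy (Z s y)) (fun _ => vy v)) by (intro; rewrite H; auto).
  rewrite (Derive_ext (fun y => vz (Z s y)) (fun _ => vz v)) by (intro; rewrite H; auto).
  rewrite !Derive_const; reflexivity.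
Qed.

Section Cylinder.

Variables (g : R -> vec3) (w : vec3).

Definition tangent_comb (a b x : R) : vec3 := vadd (vscal a (dcurve g x)) (vscal b w).

Lemma dot_C_tangent_comb (C : vec3) (a b x : R) :
  dot C (tangent_comb a b x) = a * dot C (dcurve g x) + b * dot C w.
Proof. unfold tangent_comb; vcomp; ring. Qed.

Lemma dot_tangent_comb (a b a' b' x : R) :
  dot (tangent_comb a b x) (tangent_comb a' b' x) =
  a*a' * dot (dcurve g x) (dcurve g x) + (a*b' + a'*b) * dot (dcurve g x) w
  + b*b' * dot w w.
Proof. unfold tangent_comb; vcomp; ring. Qed.

Lemma dcurve_tangent_comb (a b x : R) : twice_derivable g x ->
  dcurve (tangent_comb a b) x = vscal a (dcurve (dcurve g) x).
Proof.
  unfold tangent_comb; split_curve g; destruct w as [[w1 w2] w3].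
  intros [_ [_ [_ [H1 [H2 H3]]]]]; vcomp.
  f_equal; [f_equal|]; apply is_derive_unique; auto_derive; auto; ring.
Qed.

Lemma dcurve_scaled_tangent_comb (C : vec3) (a b a' b' x : R) : twice_derivable g x ->
  dcurve (fun y => vscal (dot C (tangent_comb a b y)) (tangent_comb a' b' y)) x =
  vadd (vscal (dot C (vscal a (dcurve (dcurve g) x))) (tangent_comb a' b' x))
       (vscal (dot C (tangent_comb a b x)) (vscal a' (dcurve (dcurve g) x))).
Proof.
  unfold tangent_comb; split_curve g; destruct w as [[w1 w2] w3], C as [[c1 c2] c3].
  intros [G1 [G2 [G3 [H1 [H2 H3]]]]]; vcomp.
  f_equal; [f_equal|]; apply is_derive_unique; auto_derive; repeat split; auto; ring.
Qed.

Lemma d_s_cylinder (s t : R) : twice_derivable g s -> d_s (cylinder g w) s t = dcurve g s.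
Proof.
  unfold d_s, cylinder; split_curve g; destruct w as [[w1 w2] w3].
  intros [H1 [H2 [H3 _]]]; vcomp.
  f_equal; [f_equal|]; apply is_derive_unique; auto_derive; auto; ring.
Qed.

Lemma d_t_cylinder (s t : R) : d_t (cylinder g w) s t = w.
Proof.
  unfold d_t, cylinder; split_curve g; destruct w as [[w1 w2] w3]; vcomp.
  f_equal; [f_equal|]; apply is_derive_unique; auto_derive; auto; ring.
Qed.

Lemma cfield_cylinder (a b s t : R) : twice_derivable g s ->
  cfield (cylinder g w) a b s t = tangent_comb a b s.
Proof. intros; unfold cfield; rewrite d_s_cylinder, d_t_cylinder; auto. Qed.

Lemma unit_normal_cylinder (s t : R) : twice_derivable g s ->
  dot (dcurve g s) (dcurve g s) = 1 -> dot w w = 1 -> dot (dcurve g s) w = 0 ->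
  unit_normal (cylinder g w) s t = cross (dcurve g s) w.
Proof.
  intros Hg Hp Hw Hpw; unfold unit_normal, vnorm.
  rewrite d_s_cylinder, d_t_cylinder, dot_cross_orthonormal, sqrt_1, Rinv_1 by auto.
  apply vec3_ext; vcomp; ring.
Qed.

Variables (kappa : R -> R) (a b : Rbar).

Definition unit_speed_planar_at (x : R) : Prop :=
  twice_derivable g x /\ dot (dcurve g x) (dcurve g x) = 1 /\ dot (dcurve g x) w = 0 /\
  dcurve (dcurve g) x = vscal (kappa x) (cross (dcurve g x) w).

Hypothesis planar : forall x : R, Rbar_lt a x -> Rbar_lt x b -> unit_speed_planar_at x.
Hypothesis w_unit : dot w w = 1.
Variable C : vec3.

Let psi := cylinder g w.

Lemma tang_cylinder (s t k : R) (u : vec3) : Rbar_lt a s -> Rbar_lt s b ->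
  dot u (cross (dcurve g s) w) = 0 ->
  tang psi s t (vadd (vscal k (cross (dcurve g s) w)) u) = u.
Proof.
  intros Ha Hb Hu; destruct (planar s Ha Hb) as [Hg [Hp [Hpw _]]].
  unfold tang; rewrite unit_normal_cylinder by auto.
  apply proj_orth_unit, Hu; apply dot_cross_orthonormal; auto.
Qed.

Lemma nabla_cfield_cylinder (A B aj bj s t : R) : Rbar_lt a s -> Rbar_lt s b ->
  nabla C psi A B (cfield psi aj bj) s t =
  vscal (dot C (tangent_comb aj bj s)) (tangent_comb A B s).
Proof.
  intros Ha Hb; destruct (planar s Ha Hb) as [Hg [Hp [Hpw Hk]]]; unfold nabla.
  rewrite (d_s_local a b _ (tangent_comb aj bj) s t Ha Hb)
    by (intros x Hxa Hxb; apply cfield_cylinder, planar; auto).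
  rewrite (d_t_const _ s t (tangent_comb aj bj s)) by (intros; apply cfield_cylinder; auto).
  rewrite dcurve_tangent_comb, Hk, !cfield_cylinder by auto.
  rewrite <- (tang_cylinder s t (A * aj * kappa s)) by (auto; unfold tangent_comb; vcomp; ring).
  f_equal; apply vec3_ext; unfold tangent_comb; vcomp; ring.
Qed.

Lemma nabla_nabla_cfield_cylinder (A B A' B' aj bj s t : R) : Rbar_lt a s -> Rbar_lt s b ->
  nabla C psi A B (nabla C psi A' B' (cfield psi aj bj)) s t =
  vadd (vscal (A * aj * kappa s * dot C (cross (dcurve g s) w)) (tangent_comb A' B' s))
       (vscal (dot C (tangent_comb aj bj s) * dot C (tangent_comb A' B' s))
              (tangent_comb A B s)).
Proof.
  intros Ha Hb; destruct (planar s Ha Hb) as [Hg [Hp [Hpw Hk]]]; unfold nabla at 1.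
  set (Z := fun x => vscal (dot C (tangent_comb aj bj x)) (tangent_comb A' B' x)).
  rewrite (d_s_local a b _ Z s t Ha Hb)
    by (intros; apply nabla_cfield_cylinder; auto).
  rewrite (d_t_const _ s t (Z s)) by (intros; apply nabla_cfield_cylinder; auto).
  unfold Z; rewrite nabla_cfield_cylinder, dcurve_scaled_tangent_comb, Hk, !cfield_cylinder
    by auto.
  rewrite <- (tang_cylinder s t (A * dot C (tangent_comb aj bj s) * A' * kappa s))
    by (auto; unfold tangent_comb; vcomp; ring).
  f_equal; apply vec3_ext; unfold tangent_comb; vcomp; ring.
Qed.

End Cylinder.

Theorem theorem3p1
  (C : vec3) (w : vec3) (a b : Rbar) (g : R -> vec3) (kappa : R -> R) :
  (* canonical snm-connection: C constant with |C| = 1 *)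
  dot C C = 1 ->
  (* w a unit vector *)
  dot w w = 1 ->
  (* gamma smooth on the open interval I = (a, b) *)
  smooth_curve_on (fun s => Rbar_lt a s /\ Rbar_lt s b) g ->
  (* parametrized by arc length *)
  (forall s : R, Rbar_lt a s -> Rbar_lt s b -> dot (dcurve g s) (dcurve g s) = 1) ->
  (* contained in a plane orthogonal to w *)
  (exists c : R, forall s : R, Rbar_lt a s -> Rbar_lt s b -> dot (g s) w = c) ->
  (* curvature: gamma'' = kappa n,  n = gamma' x w *)
  (forall s : R, Rbar_lt a s -> Rbar_lt s b ->
     dcurve (dcurve g) s = vscal (kappa s) (cross (dcurve g s) w)) ->
  forall s t : R, Rbar_lt a s -> Rbar_lt s b ->
  forall a1 b1 a2 b2 : R,
    let e1 := cfield (cylinder g w) a1 b1 s t in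
    let e2 := cfield (cylinder g w) a2 b2 s t in
    (* {e1, e2} an orthonormal basis of T_{psi(s,t)} M *)
    dot e1 e1 = 1 -> dot e2 e2 = 1 -> dot e1 e2 = 0 ->
    sect_expr C (cylinder g w) a1 b1 a2 b2 s t =
      / 2 * ((dot w C) ^ 2 + (dot (dcurve g s) C) ^ 2
             - kappa s * dot (cross (dcurve g s) w) C).
Proof.
  intros _ Hw Hsm Hunit [c Hpl] Hk s t Ha Hb a1 b1 a2 b2 e1 e2 H1 H2 H3.
  assert (Hplanar : forall x : R, Rbar_lt a x -> Rbar_lt x b -> unit_speed_planar_at g w kappa x).
  { intros x Hxa Hxb.
    assert (Hg := smooth_twice_derivable _ g x Hsm (conj Hxa Hxb)).
    refine (conj Hg (conj (Hunit x Hxa Hxb) (conj _ (Hk x Hxa Hxb)))).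
    apply (dcurve_planar_orth a b g w c); auto. }
  destruct (Hplanar s Ha Hb) as [Hg [Hp [Hpw _]]].
  unfold e1, e2 in *; clear e1 e2.
  rewrite !cfield_cylinder in H1 by auto; rewrite !cfield_cylinder in H2 by auto;
    rewrite !cfield_cylinder in H3 by auto.
  unfold sect_expr, curv; cbv zeta.
  rewrite !(nabla_nabla_cfield_cylinder g w kappa a b Hplanar Hw), !cfield_cylinder,
    !dot_vsub_l, (dot_comm (tangent_comb g w a2 b2 s)), H1, H2, H3, !dot_C_tangent_comb
    by auto.
  rewrite dot_tangent_comb, Hp, Hpw, Hw in H1; rewrite dot_tangent_comb, Hp, Hpw, Hw in H2;
    rewrite dot_tangent_comb, Hp, Hpw, Hw in H3.
  destruct (orthonormal_rows_cols a1 b1 a2 b2) as [Ca [Cb Cab]]; [lra | lra | lra |].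
  rewrite (dot_comm w C), (dot_comm (dcurve g s) C), (dot_comm (cross _ _) C).
  set (P := dot C (dcurve g s)); set (W := dot C w); set (N := dot C (cross (dcurve g s) w)).
  transitivity (/2 * ((a1^2 + a2^2) * P^2 + 2 * (a1*b1 + a2*b2) * P * W
                      + (b1^2 + b2^2) * W^2 - (a1^2 + a2^2) * kappa s * N)).
  - ring.
  - rewrite Ca, Cb, Cab; ring.
Qed.
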